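(* Assume the ABC Conjecture over $\mathbb{Z}$. There is an absolute constant $c>0$ such that the following holds. Let $N>0$ be an integer, let $E_N$ be the elliptic curve $y^2=x^3-Nx$ over $\mathbb{Q}$, and let $P\in E_N(\mathbb{Q})$ be a non-torsion point. If $L(2P)\le 1$, then $$\log|x(P)|\le c\log N\quad\text{and}\quad \log|x(2P)|\le c\log N .$$
   Context: ABC Conjecture over $\mathbb{Z}$: for every $\epsilon>0$ there is a constant $K_\epsilon$ such that for all coprime integers $a,b,c$ with $a+b=c$ one has $\max(|a|,|b|,|c|)\le K_\epsilon\,\mathrm{rad}(abc)^{1+\epsilon}$, where $\mathrm{rad}(m)$ is the product of the distinct primes dividing $m$. The constant $c$ may depend on the constants $K_\epsilon$ of the ABC Conjecture, but not on $N$ or $P$. For a rational point $Q\ne O$ on an elliptic curve in Weierstrass form over $\mathbb{Q}$, the length $L(Q)$ is the number of distinct primes $p$ with $|x(Q)|_p>1$, where $|\cdot|_p$ is the usual $p$-adic absolute value. Equivalently, write $x(Q)=A_Q/B_Q^2$ in lowest terms; then $L(Q)$ is the number of distinct prime divisors of $B_Q$. *)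

From HB Require Import structures.
From mathcomp Require Import all_boot all_order all_algebra.
From Stdlib Require Import Reals.
Set Implicit Arguments. Unset Strict Implicit. Unset Printing Implicit Defensive.
Import GRing.Theory Num.Theory.
Local Open Scope ring_scope.

(* radical of a natural number: product of its distinct prime divisors
   (rad 0 = rad 1 = 1 by the convention primes 0 = [::]) *)
Definition rad (n : nat) : nat := \prod_(p <- primes n) p.

Definition int2R (z : int) : R :=
  match z with
  | Posz n => INR n
  | Negz n => Ropp (INR n.+1)
  end.

Definition rat2R (q : rat) : R := Rdiv (int2R (numq q)) (int2R (denq q)).

Definition ABC : Prop :=
  forall eps : R, Rlt 0 eps ->
  exists K : R, forall a b c : int,
    coprimez a b -> coprimez a c -> coprimez b c -> GRing.add a b = c ->
    Rle (Rmax (int2R (Num.norm a)) (Rmax (int2R (Num.norm b)) (int2R (Num.norm c))))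
        (Rmult K (Rpower (INR (rad (absz (GRing.mul (GRing.mul a b) c)))) (Rplus 1 eps))).

Inductive pt := Inf | Aff of rat & rat.

Definition on_curve (N : nat) (P : pt) : Prop :=
  match P with
  | Inf => True
  | Aff x y => y ^+ 2 = x ^+ 3 - N%:R * x
  end.

(* chord-and-tangent group law on y^2 = x^3 + a x (here a = -N) *)
Definition add (N : nat) (P Q : pt) : pt :=
  match P, Q with
  | Inf, _ => Q
  | _, Inf => P
  | Aff x1 y1, Aff x2 y2 =>
      if x1 == x2 then
        if y1 == - y2 then Inf
        else let l := ((3%:R * x1 ^+ 2 - N%:R) / (2%:R * y1)) in
             let x3 := (l ^+ 2 - x1 - x2) in
             Aff x3 (l * (x1 - x3) - y1)
      else let l := ((y2 - y1) / (x2 - x1)) in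
           let x3 := (l ^+ 2 - x1 - x2) in
           Aff x3 (l * (x1 - x3) - y1)
  end.

Fixpoint mulpt (N : nat) (n : nat) (P : pt) : pt :=
  match n with
  | 0 => Inf
  | m.+1 => add N P (mulpt N m P)
  end.

Definition torsion (N : nat) (P : pt) : Prop :=
  exists n : nat, leq 1 n /\ mulpt N n P = Inf.

Definition xcoord (P : pt) : rat :=
  match P with Inf => 0 | Aff x _ => x end.

(* length L(Q): number of distinct primes dividing the denominator of x(Q)
   (x(Q) = A/B^2 in lowest terms, so these are the primes of B).
   The value at O is irrelevant (L is only applied to non-zero points). *)
Definition len (P : pt) : nat :=
  match P with
  | Inf => 0
  | Aff x _ => size (primes (absz (denq x)))
  end.

From Pilot Require Import Defs.
From Stdlib Require Import Reals Lra.
From HB Require Import structures.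
From mathcomp Require Import all_boot all_order all_algebra.
From mathcomp Require ring.
From mathcomp Require Import zify.
Set Implicit Arguments. Unset Strict Implicit. Unset Printing Implicit Defensive.

(* Write x(P) = A/D in lowest terms, a = |A|, d = D and w = |a^2 - N d^2|.
   Clearing denominators in the curve equation shows that a w is a square and
   x(2P) = (a^2 + N d^2)^2 / 4 d a w.  Call a prime bad if it divides d, or a
   but not N, or w but not 2N; every bad prime divides the denominator of
   x(2P), so L(2P) <= 1 leaves at most one bad prime p.  The relation between
   w, a^2 and N d^2, divided by its gcd, is a coprime triple u + v = z whose
   radical divides 2 N p.  ABC with eps = 1/6 gives z^6 <= K (2 N p)^7, and
   p^4 <= N^5 z^3 (p <= d, or p^2 <= a w when d = 1), so z <= (2 K N)^67;
   hence a and (a^2 + N d^2)^2 are at most (2 K N)^136, which bounds both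
   |x(P)| <= a and |x(2P)| <= (a^2 + N d^2)^2.  For N = 1 the same
   configuration is impossible (it would make a fourth power or a square
   one more than a square), as it must be since log N = 0. *)

Lemma coprime_no_common_prime m n :
  (forall q, prime q -> q %| m -> q %| n -> False) -> coprime m n.
Proof.
move=> noq; apply/eqP; case: (ltngtP (gcdn m n) 1) => // [g0 | g1]; exfalso.
  have {}g0 : gcdn m n = 0 by case: (gcdn m n) g0.
  by apply: (noq 2) => //; [apply: dvdn_trans (dvdn_gcdl m n) | apply: dvdn_trans (dvdn_gcdr m n)];
     rewrite g0.
apply: (noq _ (pdiv_prime g1)).
  exact: dvdn_trans (pdiv_dvd _) (dvdn_gcdl m n).
exact: dvdn_trans (pdiv_dvd _) (dvdn_gcdr m n).
Qed.

Lemma coprime_div_gcd m n : 0 < gcdn m n -> coprime (m %/ gcdn m n) (n %/ gcdn m n).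
Proof.
move=> g_gt0; rewrite /coprime -(eqn_pmul2r g_gt0) mul1n muln_gcdl.
by rewrite !divnK ?dvdn_gcdl ?dvdn_gcdr.
Qed.

Lemma coprime_square_factor u v m : coprime u v -> u * v = m ^ 2 -> exists r, u = r ^ 2.
Proof.
move=> cuv uvm; case: (posnP u) => [->|u_gt0]; first by exists 0.
set g := gcdn u m; have g_gt0 : 0 < g by rewrite gcdn_gt0 u_gt0.
exists g.
have -> : u = gcdn (u ^ 2) (m ^ 2).
  by rewrite -uvm -mulnn -muln_gcdr (eqP cuv) muln1.
have [ug mg] : u = u %/ g * g /\ m = m %/ g * g by rewrite !divnK ?dvdn_gcdl ?dvdn_gcdr.
rewrite {1}ug {1}mg !expnMn -muln_gcdl.
by rewrite (eqP (coprimeXl 2 (coprimeXr 2 (coprime_div_gcd g_gt0)))) mul1n.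
Qed.

Lemma square_succ_square x y : x ^ 2 = y ^ 2 + 1 -> y = 0.
Proof.
move=> e; have : y < x by rewrite -(ltn_exp2r _ _ (isT : 0 < 2)) e addn1.
by move: e; rewrite !expnS !expn0 !muln1; nia.
Qed.

Lemma rad_gt0 n : 0 < Defs.rad n.
Proof.
by rewrite /Defs.rad big_seq prodn_cond_gt0 // => p; rewrite mem_primes => /andP[/prime_gt0].
Qed.

Lemma rad_dvd n M : (forall q, prime q -> q %| n -> q %| M) -> Defs.rad n %| M.
Proof.
rewrite /Defs.rad => primes_dvd.
have : {subset primes n <= [pred q | prime q && (q %| M)]}.
  by move=> q; rewrite mem_primes => /and3P[qp _ qn]; rewrite inE qp primes_dvd.
elim: (primes n) (primes_uniq n) => [|q s IH] /=; first by rewrite big_nil dvd1n.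
move=> /andP[q_s us] sub; rewrite big_cons.
have /andP[qp qM] := sub q (mem_head q s).
have sub_s : {subset s <= [pred q | prime q && (q %| M)]}.
  by move=> r rs; apply: sub; rewrite inE rs orbT.
rewrite Gauss_dvd ?qM ?IH //= big_seq.
apply: (big_ind (coprime q)) => [|x y|r rs]; first exact: coprimen1.
  by rewrite coprimeMr => -> ->.
have /andP[rp _] := sub_s r rs.
rewrite prime_coprime // dvdn_prime2 //; apply: contraNneq q_s => ->; exact: rs.
Qed.

(* The instance eps = 1/6 of ABC, with all quantities raised to the sixth
   power so that it becomes a statement about natural numbers. *)
Definition abc_nat (K : nat) : Prop :=
  forall u v z : nat, coprime u v -> coprime u z -> coprime v z -> u + v = z ->
    z ^ 6 <= K * Defs.rad (u * v * z) ^ 7.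

Section RealFacts.
Local Open Scope R_scope.

Lemma INR_expn m n : INR (m ^ n) = INR m ^ n.
Proof. by elim: n => [|n IH] //=; rewrite expnS mult_INR IH. Qed.

Lemma abc_nat_of_ABC : ABC -> exists K, (0 < K)%N /\ abc_nat K.
Proof.
move=> abc; have [K HK] := abc (1/6) ltac:(lra).
have [n Kn] := INR_unbounded (K ^ 6).
exists n.+1; split=> // u v z cuv cuz cvz uvz.
have := HK u v z cuv cuz cvz; rewrite -PoszD uvz => /(_ erefl).
rewrite -!PoszM /= => bound.
set r := INR (Defs.rad (u * v * z)) in bound *.
have r_gt0 : 0 < r by apply/lt_0_INR/ltP/rad_gt0.
have z_le : INR z <= K * Rpower r (1 + 1/6).
  by apply: Rle_trans bound; apply: Rle_trans (Rmax_r _ _); apply: Rmax_r.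
have r7 : r ^ 7 = Rpower r (1 + 1/6) ^ 6.
  rewrite -(@Rpower_pow 7 r) // -Rpower_pow ?Rpower_mult; last exact: exp_pos.
  by f_equal; simpl; field.
apply/leP/INR_le; rewrite INR_expn mult_INR INR_expn -/r r7.
apply: Rle_trans (_ : (K * Rpower r (1 + 1/6)) ^ 6 <= _).
  by apply: pow_incr; split=> //; apply: pos_INR.
rewrite Rpow_mult_distr S_INR; apply: Rmult_le_compat_r; last by lra.
by apply: pow_le; apply: Rlt_le; apply: exp_pos.
Qed.

End RealFacts.

Lemma coprime_triple_of_sum w Y X : 0 < X -> w + Y = X ->
  exists u v z, [/\ coprime u v, coprime u z, coprime v z & u + v = z] /\
    X = gcdn X Y * z /\ u * v * z %| w * Y * X.
Proof.
move=> X_gt0 wYX; set g := gcdn X Y.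
have g_gt0 : 0 < g by rewrite gcdn_gt0 X_gt0.
have [gX gY] : g %| X /\ g %| Y by rewrite dvdn_gcdl dvdn_gcdr.
have gw : g %| w by rewrite -(dvdn_addl _ gY) wYX.
have uvz : w %/ g + Y %/ g = X %/ g by rewrite -divnDl // wYX.
have cvz : coprime (Y %/ g) (X %/ g) by rewrite coprime_sym coprime_div_gcd.
have cuv : coprime (w %/ g) (Y %/ g) by rewrite coprime_sym /coprime -gcdnDr uvz.
exists (w %/ g), (Y %/ g), (X %/ g); split; first by split; rewrite // /coprime -uvz gcdnDl.
by rewrite mulnC divnK // !dvdn_mul ?dvdn_div.
Qed.

(* The descent equation w = |a^2 - N d^2|, split according to the sign. *)
Definition descent_eq (N a d w : nat) : Prop :=
  w + N * d ^ 2 = a ^ 2 \/ w + a ^ 2 = N * d ^ 2.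

Lemma descent_triple N a d w : 0 < N -> 0 < a -> coprime a d -> descent_eq N a d w ->
  exists u v z, [/\ coprime u v, coprime u z, coprime v z & u + v = z] /\
    [/\ a ^ 2 <= N * z, N * d ^ 2 <= N * z & u * v * z %| w * (a ^ 2 * (N * d ^ 2))].
Proof.
move=> N_gt0 a_gt0 cad deq; set g := gcdn (a ^ 2) (N * d ^ 2).
have gN : g <= N.
  have cg : coprime g (d ^ 2).
    by apply: coprime_dvdl (dvdn_gcdl _ _) _; rewrite coprimeXl ?coprimeXr.
  by apply: dvdn_leq => //; rewrite -(Gauss_dvdl _ cg) dvdn_gcdr.
suff finish Y X : w + Y = X -> gcdn X Y = g -> a ^ 2 <= X -> N * d ^ 2 <= X ->
    w * Y * X = w * (a ^ 2 * (N * d ^ 2)) ->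
    exists u v z, [/\ coprime u v, coprime u z, coprime v z & u + v = z] /\
      [/\ a ^ 2 <= N * z, N * d ^ 2 <= N * z & u * v * z %| w * (a ^ 2 * (N * d ^ 2))].
  case: deq => [e|e]; apply: (finish _ _ e) => //.
  - lia.
  - by rewrite -mulnA (mulnC (N * d ^ 2)).
  - by rewrite gcdnC.
  - lia.
  - by rewrite -mulnA.
move=> wYX gXY aX dX eq_prod.
have X_gt0 : 0 < X by apply: leq_trans aX; rewrite expn_gt0 a_gt0.
have [u [v [z [cop [Xz uvz_dvd]]]]] := coprime_triple_of_sum X_gt0 wYX.
have XNz : X <= N * z by rewrite Xz gXY leq_mul2r gN orbT.
exists u, v, z; split=> //.
by split; [apply: leq_trans XNz | apply: leq_trans XNz | rewrite -eq_prod].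
Qed.

Lemma coprime_cross_eq m d e k : coprime e m -> coprime d k -> m * d = e * k -> e = d.
Proof.
move=> cem cdk mdek; apply/eqP; rewrite eqn_dvd.
by rewrite -(Gauss_dvdr _ cem) mdek dvdn_mulr // -(Gauss_dvdl _ cdk) -mdek dvdn_mull.
Qed.

Lemma descent_eq_dist N a d : descent_eq N a d `|a ^ 2 - N * d ^ 2|.
Proof.
case: (leqP (N * d ^ 2) (a ^ 2)) => [le|/ltnW le]; [left | right].
  by rewrite distnEl // subnK.
by rewrite distnEr // subnK.
Qed.

(* w is coprime to d: a common prime factor would divide w and N d^2, hence
   a^2 by the descent equation, contradicting gcd(a, d) = 1. *)
Lemma coprime_descent_den N a d w : coprime a d -> descent_eq N a d w -> coprime w d.
Proof.
move=> cad deq; apply: coprime_no_common_prime => q q_pr qw qd.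
have qNd : q %| N * d ^ 2 by rewrite dvdn_mull // dvdn_exp.
have : q %| a ^ 2.
  by case: deq => e; [rewrite -e dvdn_add | rewrite -(dvdn_addr _ qw) e].
rewrite Euclid_dvdX // => /andP[qa _].
by move: (coprime_dvdl qa cad); rewrite prime_coprime // qd.
Qed.

Section CurveAlgebra.
Import ring GRing.Theory Num.Theory.
Local Open Scope ring_scope.

Lemma tangent_x (n x y : rat) : y != 0 -> y ^+ 2 = x ^+ 3 - n * x ->
  ((3%:R * x ^+ 2 - n) / (2%:R * y)) ^+ 2 - x - x = (x ^+ 2 + n) ^+ 2 / (4%:R * y ^+ 2).
Proof.
move=> y_neq0 curve.
have -> : ((3%:R * x ^+ 2 - n) / (2%:R * y)) ^+ 2 - x - x =
    (x ^+ 2 + n) ^+ 2 / (4%:R * y ^+ 2) + 2%:R * x * (x ^+ 3 - n * x - y ^+ 2) / y ^+ 2.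
  by field; rewrite y_neq0.
by rewrite -curve subrr mulr0 mul0r addr0.
Qed.

Lemma y_neq_opp (y : rat) : y != 0 -> (y == - y) = false.
Proof. by move=> y_neq0; apply/negbTE; rewrite -addr_eq0 -mulr2n mulrn_eq0. Qed.

Lemma double_point N x y : on_curve N (Aff x y) -> ~ torsion N (Aff x y) ->
  y != 0 /\ exists y2, mulpt N 2 (Aff x y) = Aff ((x ^+ 2 + N%:R) ^+ 2 / (4%:R * y ^+ 2)) y2.
Proof.
move=> curve not_tors.
have y_neq0 : y != 0.
  by apply: contra_notN not_tors => /eqP y0; exists 2%N; rewrite /= eqxx y0 oppr0 eqxx.
split=> //; rewrite /= eqxx y_neq_opp // -tangent_x //.
by eexists.
Qed.

Lemma curve_cleared (n A D m e : rat) : D != 0 -> e != 0 ->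
  (m / e) ^+ 2 = (A / D) ^+ 3 - n * (A / D) ->
  m ^+ 2 * D ^+ 3 = e ^+ 2 * (A * (A ^+ 2 - n * D ^+ 2)).
Proof.
move=> D_neq0 e_neq0 curve; apply/eqP; rewrite -subr_eq0.
have -> : m ^+ 2 * D ^+ 3 - e ^+ 2 * (A * (A ^+ 2 - n * D ^+ 2)) =
    e ^+ 2 * D ^+ 3 * ((m / e) ^+ 2 - ((A / D) ^+ 3 - n * (A / D))).
  by field; rewrite D_neq0 e_neq0.
by rewrite curve subrr mulr0.
Qed.

Lemma tangent_x_cleared (n A D m e : rat) : D != 0 -> e != 0 -> m != 0 ->
  e ^+ 2 = D ^+ 3 ->
  ((A / D) ^+ 2 + n) ^+ 2 / (4%:R * (m / e) ^+ 2) =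
    (A ^+ 2 + n * D ^+ 2) ^+ 2 / (4%:R * D * m ^+ 2).
Proof.
move=> D_neq0 e_neq0 m_neq0 eD.
have -> : ((A / D) ^+ 2 + n) ^+ 2 / (4%:R * (m / e) ^+ 2) =
    (A ^+ 2 + n * D ^+ 2) ^+ 2 * e ^+ 2 / (4%:R * D ^+ 4 * m ^+ 2).
  by field; rewrite D_neq0 e_neq0 m_neq0.
by rewrite eD; field; rewrite D_neq0 m_neq0.
Qed.

End CurveAlgebra.

Section LowestTerms.
Import GRing.Theory Num.Theory.
Local Open Scope ring_scope.

Lemma sq_absz (z : int) : (`|z| ^ 2)%N%:Z = z ^+ 2.
Proof. by rewrite -abszX gez0_abs ?sqr_ge0. Qed.

(* Clearing denominators in y^2 = x^3 - N x gives
   m^2 D^3 = e^2 A (A^2 - N D^2); comparing coprime factors, e^2 = D^3 and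
   |m|^2 = a w. *)
Lemma lowest_terms_curve N (x y : rat) (a d w : nat) :
  `|numq x|%N = a -> `|denq x|%N = d -> `|(a ^ 2)%N%:Z - (N * d ^ 2)%N%:Z|%N = w ->
  y != 0 -> y ^+ 2 = x ^+ 3 - N%:R * x ->
  [/\ (0 < a)%N, (0 < w)%N, (`|denq y| ^ 2 = d ^ 3)%N & (`|numq y| ^ 2 = a * w)%N].
Proof.
move=> def_a def_d def_w y_neq0 curve.
set A := numq x; set D := denq x; set m := numq y; set e := denq y.
have cleared : m ^+ 2 * D ^+ 3 = e ^+ 2 * (A * (A ^+ 2 - N%:Z * D ^+ 2)).
  apply: (intr_inj (R := rat)); rewrite !(rmorphXn, rmorphM, rmorphB) /=.
  apply: curve_cleared; rewrite ?intr_eq0 ?denq_neq0 //.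
  by rewrite !divq_num_den.
have W_eq : A ^+ 2 - N%:Z * D ^+ 2 = (a ^ 2)%N%:Z - (N * d ^ 2)%N%:Z.
  by rewrite PoszM -def_a -def_d !sq_absz.
have cleared_nat : (`|m| ^ 2 * d ^ 3 = `|e| ^ 2 * (a * w))%N.
  by have := congr1 absz cleared; rewrite W_eq !(abszX, abszM) def_a def_d def_w.
have cad : coprime a d by rewrite -def_a -def_d coprime_num_den.
have e2d3 : (`|e| ^ 2 = d ^ 3)%N.
  apply: (coprime_cross_eq (m := `|m| ^ 2) (k := a * w)) => //.
    by rewrite coprimeXl // coprimeXr // coprime_sym coprime_num_den.
  rewrite coprimeXl // coprimeMr (coprime_sym d) cad coprime_sym.
  by apply: coprime_descent_den cad _; rewrite -def_w; apply: descent_eq_dist.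
have d3_gt0 : (0 < d ^ 3)%N by rewrite expn_gt0 -def_d absz_gt0 denq_neq0.
have m2 : (`|m| ^ 2 = a * w)%N.
  by apply/eqP; rewrite -(eqn_pmul2r d3_gt0) cleared_nat e2d3 mulnC.
have /andP[a_gt0 w_gt0] : ((0 < a) && (0 < w))%N.
  by rewrite -muln_gt0 -m2 expn_gt0 absz_gt0 numq_eq0 y_neq0.
by split.
Qed.

Lemma lowest_terms_double N (x y : rat) (a d w : nat) :
  `|numq x|%N = a -> `|denq x|%N = d -> (`|denq y| ^ 2 = d ^ 3)%N ->
  (`|numq y| ^ 2 = a * w)%N -> y != 0 ->
  (x ^+ 2 + N%:R) ^+ 2 / (4%:R * y ^+ 2) =
    ((a ^ 2 + N * d ^ 2) ^ 2)%N%:R / (4 * d * (a * w))%N%:R.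
Proof.
move=> def_a def_d e2d3 m2 y_neq0.
set A := numq x; set D := denq x; set m := numq y; set e := denq y.
have hD : D%:~R = d%:R :> rat by rewrite -[D]absz_denq def_d.
have hA2 : A%:~R ^+ 2 = (a ^ 2)%:R :> rat by rewrite -rmorphXn -sq_absz def_a.
have hm2 : m%:~R ^+ 2 = (a * w)%:R :> rat by rewrite -rmorphXn -sq_absz m2.
have he2 : e%:~R ^+ 2 = D%:~R ^+ 3 :> rat.
  by rewrite -rmorphXn -sq_absz e2d3 hD -natrX.
have -> : (x ^+ 2 + N%:R) ^+ 2 / (4%:R * y ^+ 2) =
    ((A%:~R / D%:~R) ^+ 2 + N%:R) ^+ 2 / (4%:R * (m%:~R / e%:~R) ^+ 2).
  by rewrite !divq_num_den.
rewrite tangent_x_cleared ?intr_eq0 ?denq_neq0 ?numq_eq0 //.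
by rewrite hA2 hm2 hD !(natrM, natrD, natrX).
Qed.

Lemma numq_cross (u v : nat) : (0 < v)%N ->
  (`|numq (u%:R / v%:R : rat)| * v = u * `|denq (u%:R / v%:R : rat)|)%N.
Proof.
move=> v_gt0; set q : rat := u%:R / v%:R.
have v_neq0 : v%:R != 0 :> rat by rewrite pnatr_eq0 -lt0n.
have : numq q * v%:Z = u%:Z * denq q.
  apply: (intr_inj (R := rat)); rewrite !rmorphM /= numqE.
  by rewrite mulrAC divfK.
by move/(congr1 absz); rewrite !abszM.
Qed.
End LowestTerms.


(* Bad primes divide the denominator of x(2P) (bad_prime_dvd_den);
   every other prime factor of w a N d divides 2N (rad_dvd_bad). *)
Definition bad_prime (N a d w q : nat) : bool :=
  prime q && [|| q %| d, (q %| a) && ~~ (q %| N) | (q %| w) && ~~ (q %| 2 * N)].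

(* A bad prime never divides a^2 + N d^2: otherwise it would divide both a and d. *)
Lemma bad_prime_ndvd_sum N a d w q : coprime a d -> descent_eq N a d w ->
  bad_prime N a d w q -> ~~ (q %| a ^ 2 + N * d ^ 2).
Proof.
move=> cad deq /andP[q_pr q_bad]; apply/negP => qU.
have sq n : (q %| n ^ 2) = (q %| n) by rewrite Euclid_dvdX // andbT.
suff [qa qd] : q %| a /\ q %| d by move: (coprime_dvdl qa cad); rewrite prime_coprime // qd.
have a_of_d : q %| d -> q %| a.
  by move=> qd; rewrite -sq -(dvdn_addl _ (_ : q %| N * d ^ 2)) // dvdn_mull // sq.
have d_of_N : ~~ (q %| N) -> q %| N * d ^ 2 -> q %| d.
  by move=> qN; rewrite Euclid_dvdM // (negbTE qN) sq.
case/or3P: q_bad => [qd | /andP[qa qN] | /andP[qw q2N]]; first by split=> //; apply: a_of_d.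
  by split=> //; apply: (d_of_N qN); rewrite -(dvdn_addr _ (_ : q %| a ^ 2)) ?sq.
have qN : ~~ (q %| N) by apply: contraNN q2N; apply: dvdn_mull.
have q2 : ~~ (q %| 2) by apply: contraNN q2N; apply: dvdn_mulr.
case: deq => e.
  suff qd : q %| d by split=> //; apply: a_of_d.
  move: qU; rewrite -e -addnA (dvdn_addr _ qw) addnn -mul2n mulnA Euclid_dvdM //.
  by rewrite (negbTE q2N) sq.
have qa : q %| a.
  move: qU; rewrite -e addnCA (dvdn_addr _ qw) addnn -mul2n Euclid_dvdM //.
  by rewrite (negbTE q2) sq.
by split=> //; apply: (d_of_N qN); rewrite -e dvdn_add ?sq.
Qed.

Lemma bad_prime_dvd_den N a d w n3 d3 q : coprime a d -> descent_eq N a d w ->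
  n3 * (4 * d * (a * w)) = (a ^ 2 + N * d ^ 2) ^ 2 * d3 ->
  bad_prime N a d w q -> q %| d3.
Proof.
move=> cad deq cross q_bad; have /andP[q_pr q_div] := q_bad.
have : q %| (a ^ 2 + N * d ^ 2) ^ 2 * d3.
  rewrite -cross dvdn_mull //.
  case/or3P: q_div => [qd | /andP[qa _] | /andP[qw _]].
  - by apply/dvdn_mulr/dvdn_mull.
  - by apply/dvdn_mull/dvdn_mulr.
  - by apply/dvdn_mull/dvdn_mull.
by rewrite Euclid_dvdM // Euclid_dvdX // (negbTE (bad_prime_ndvd_sum cad deq q_bad)).
Qed.

(* A predicate with all its witnesses in a list of length at most one has at
   most one witness p; we take p = 1 when there is none. *)
Lemma at_most_one_witness (P : pred nat) (s : seq nat) :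
  size s <= 1 -> {subset P <= s} ->
  exists p, (p = 1 \/ P p) /\ forall q, P q -> q = p.
Proof.
case: s => [|p [|//]] _ sub; first by exists 1; split=> [|q /sub]; [left|].
have one q : P q -> q = p by move=> /sub; rewrite inE => /eqP.
case Pp: (P p); first by exists p; split; [right|].
by exists 1; split=> [|q Pq]; [left | move: Pp; rewrite -(one q Pq) Pq].
Qed.

Lemma rad_dvd_bad N a d w p n : (forall q, bad_prime N a d w q -> q = p) ->
  n %| w * (a ^ 2 * (N * d ^ 2)) -> Defs.rad n %| 2 * N * p.
Proof.
move=> only_p n_dvd; apply: rad_dvd => q q_pr qn.
case: (boolP (q %| 2 * N)) => [q2N | q2N]; first exact: dvdn_mulr.
have qN : ~~ (q %| N) by apply: contraNN q2N; apply: dvdn_mull.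
have q_div : [|| q %| w, q %| a | q %| d].
  by move: (dvdn_trans qn n_dvd); rewrite !Euclid_dvdM // !orbb (negbTE qN).
rewrite (only_p q) ?dvdn_mull // /bad_prime q_pr qN q2N !andbT /=.
by case/or3P: q_div => ->; rewrite ?orbT.
Qed.

(* The bad prime p is small: p^4 <= N^2 X^3 whenever a^2, N d^2 <= X.
   If d > 1 then p is the least prime factor of d; if d = 1 then p divides
   a w = mm^2, while w <= N a^2. *)
Lemma bad_prime_bound N a d w mm p X : 0 < N -> 0 < a -> 0 < d -> 0 < w ->
  descent_eq N a d w -> mm ^ 2 = a * w ->
  (p = 1 \/ bad_prime N a d w p) -> (forall q, bad_prime N a d w q -> q = p) ->
  a ^ 2 <= X -> N * d ^ 2 <= X -> p ^ 4 <= N ^ 2 * X ^ 3.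
Proof.
move=> N_gt0 a_gt0 d_gt0 w_gt0 deq mm_aw p_bad only_p aX dX.
have X_gt0 : 0 < X by apply: leq_trans aX; rewrite expn_gt0 a_gt0.
have N2_gt0 : 0 < N ^ 2 by rewrite expn_gt0 N_gt0.
case: p_bad => [-> | /andP[p_pr p_div]]; first by rewrite exp1n muln_gt0 N2_gt0 expn_gt0 X_gt0.
have [d_gt1 | d_le1] := ltnP 1 d.
  have p_le_d : p <= d.
    by rewrite -(only_p (pdiv d)) ?pdiv_leq // /bad_prime pdiv_prime // pdiv_dvd.
  have p2X : p ^ 2 <= X.
    by apply: leq_trans dX; apply: leq_trans (leq_pmull _ N_gt0); rewrite leq_exp2r.
  apply: (@leq_trans (X ^ 2)); first by rewrite (expnM p 2 2) leq_exp2r.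
  by apply: leq_trans (leq_pmull _ N2_gt0); apply: leq_pexp2l.
have d1 : d = 1 by apply/eqP; rewrite eqn_leq d_le1 d_gt0.
have w_le : w <= N * a ^ 2.
  case: deq; rewrite d1 exp1n muln1 => e.
    by rewrite -e; apply: leq_trans (leq_addr _ _) (leq_pmull _ N_gt0).
  by rewrite -e; apply: leq_trans (leq_addr _ _) (leq_pmulr _ _); rewrite expn_gt0 a_gt0.
have p2 : p ^ 2 <= a * w.
  have p_aw : p %| a * w.
    case/or3P: p_div => [| /andP[pa _] | /andP[pw _]].
    - by rewrite d1 dvdn1 => /eqP p1; rewrite p1 in p_pr.
    - exact: dvdn_mulr.
    - exact: dvdn_mull.
  have p_mm : p %| mm by move: p_aw; rewrite -mm_aw Euclid_dvdX // andbT.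
  have mm_gt0 : 0 < mm by rewrite -(ltn_exp2r 0 mm (isT : 0 < 2)) mm_aw muln_gt0 a_gt0.
  by rewrite -mm_aw leq_exp2r // dvdn_leq.
apply: (@leq_trans ((a * (N * a ^ 2)) ^ 2)).
  by rewrite (expnM p 2 2) leq_exp2r //; apply: leq_trans p2 _; rewrite leq_mul2l w_le orbT.
have -> : (a * (N * a ^ 2)) ^ 2 = N ^ 2 * (a ^ 2) ^ 3 by nia.
by rewrite leq_mul2l leq_exp2r // aX orbT.
Qed.

(* The exponent bookkeeping: ABC gives z^6 <= T^8 p^7 and the bad prime
   satisfies p^4 <= T^5 z^3; since 7 * 3/4 < 6 this bounds z. *)
Lemma abc_exponent_bound T z p :
  0 < z -> z ^ 6 <= T ^ 8 * p ^ 7 -> p ^ 4 <= T ^ 5 * z ^ 3 -> z <= T ^ 67.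
Proof.
move=> z_gt0 abc p_small.
have z24 : z ^ 3 * z ^ 21 <= T ^ 67 * z ^ 21.
  apply: (@leq_trans ((T ^ 8 * p ^ 7) ^ 4)); first by rewrite -expnD (expnM z 6 4) leq_exp2r.
  have -> : (T ^ 8 * p ^ 7) ^ 4 = T ^ 32 * (p ^ 4) ^ 7 by rewrite expnMn -!expnM mulnC.
  have -> : T ^ 67 * z ^ 21 = T ^ 32 * (T ^ 5 * z ^ 3) ^ 7 by rewrite expnMn -!expnM mulnA -expnD.
  by rewrite leq_mul2l leq_exp2r // p_small orbT.
rewrite leq_pmul2r ?expn_gt0 ?z_gt0 // in z24.
by apply: leq_trans z24; rewrite -{1}(expn1 z) leq_pexp2l.
Qed.

(* For N = 1 there is no such configuration: a bad prime dividing d > 1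
   forces a = 1 and d^2 = mm^2 + 1, while d = 1 forces a w = mm^2 with
   a^2 = w + 1 and a, w coprime, hence a fourth power one more than a square. *)
Lemma no_descent_N1 a d w mm p : 0 < a -> 0 < d -> 0 < w -> coprime a d ->
  mm ^ 2 = a * w -> descent_eq 1 a d w -> (forall q, bad_prime 1 a d w q -> q = p) -> False.
Proof.
move=> a_gt0 d_gt0 w_gt0 cad mm_aw deq only_p.
have mm_gt0 : 0 < mm by rewrite -(ltn_exp2r 0 mm (isT : 0 < 2)) mm_aw muln_gt0 a_gt0.
have [d_gt1 | d_le1] := ltnP 1 d.
  have a1 : a = 1.
    apply/eqP; rewrite eqn_leq a_gt0 andbT leqNgt; apply/negP => a_gt1.
    have bad_a : bad_prime 1 a d w (pdiv a).
      by rewrite /bad_prime pdiv_prime // pdiv_dvd dvdn1 eq_sym neq_ltn prime_gt1 ?orbT ?pdiv_prime.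
    have bad_d : bad_prime 1 a d w (pdiv d) by rewrite /bad_prime pdiv_prime // pdiv_dvd.
    have := coprime_dvdl (pdiv_dvd a) cad.
    by rewrite prime_coprime ?pdiv_prime // (only_p _ bad_a) -(only_p _ bad_d) pdiv_dvd.
  case: deq; rewrite a1 exp1n mul1n => e; first by nia.
  rewrite a1 mul1n in mm_aw; rewrite -mm_aw in e.
  by move: mm_gt0; rewrite (square_succ_square (esym e)).
have d1 : d = 1 by apply/eqP; rewrite eqn_leq d_le1 d_gt0.
case: deq; rewrite d1 exp1n muln1 => e; last by nia.
have caw : coprime a w.
  apply: coprime_no_common_prime => q q_pr qa qw.
  have : q %| w + 1 by rewrite e Euclid_dvdX // qa.
  by rewrite dvdn_addr // dvdn1 => /eqP q1; rewrite q1 in q_pr.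
have [r ar] := coprime_square_factor caw (esym mm_aw).
have [t wt] : exists t, w = t ^ 2.
  by apply: (coprime_square_factor (v := a) (m := mm)); rewrite 1?coprime_sym // mulnC.
rewrite ar wt in e.
by move: w_gt0; rewrite wt (square_succ_square (esym e)).
Qed.

(* The heart of the argument: ABC applied to the descent equation, whose
   radical involves only 2N and the unique bad prime p, bounds a and the
   numerator (a^2 + N d^2)^2 of x(2P) by a fixed power of T = 2KN. *)
Lemma descent_height_bound K N a d w mm p : abc_nat K -> 0 < K -> 0 < N ->
  0 < a -> 0 < d -> 0 < w -> coprime a d -> mm ^ 2 = a * w -> descent_eq N a d w ->
  (p = 1 \/ bad_prime N a d w p) -> (forall q, bad_prime N a d w q -> q = p) ->
  a <= (K * (2 * N)) ^ 136 /\ (a ^ 2 + N * d ^ 2) ^ 2 <= (K * (2 * N)) ^ 136.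
Proof.
move=> abcK K_gt0 N_gt0 a_gt0 d_gt0 w_gt0 cad mm_aw deq p_bad only_p.
set T := K * (2 * N).
have [KT NT] : K <= T /\ 2 * N <= T by rewrite leq_pmulr ?leq_pmull ?muln_gt0.
have N_T : N <= T by apply: leq_trans NT; rewrite leq_pmull.
have T_gt0 : 0 < T by apply: leq_trans NT; rewrite muln_gt0.
have [u [v [z [[cuv cuz cvz uvz] [aNz dNz uvz_dvd]]]]] := descent_triple N_gt0 a_gt0 cad deq.
have z_gt0 : 0 < z.
  by rewrite lt0n; apply: contraTneq aNz => ->; rewrite muln0 -ltnNge expn_gt0 a_gt0.
have p_gt0 : 0 < p by case: p_bad => [-> | /andP[/prime_gt0]].
have rad_le : Defs.rad (u * v * z) <= T * p.
  apply: leq_trans (dvdn_leq _ (rad_dvd_bad only_p uvz_dvd)) _; first by rewrite !muln_gt0 N_gt0.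
  by rewrite leq_mul2r NT orbT.
have abc_z : z ^ 6 <= T ^ 8 * p ^ 7.
  apply: leq_trans (abcK u v z cuv cuz cvz uvz) _.
  by rewrite (expnS T 7) -[_ * _ * p ^ 7]mulnA -expnMn leq_mul // leq_exp2r.
have p_small : p ^ 4 <= T ^ 5 * z ^ 3.
  apply: leq_trans (bad_prime_bound N_gt0 a_gt0 d_gt0 w_gt0 deq mm_aw p_bad only_p aNz dNz) _.
  by rewrite expnMn mulnA -expnD leq_mul2r leq_exp2r ?N_T ?orbT.
have TzT : T * z <= T ^ 68.
  by rewrite (expnS T 67) leq_mul // (abc_exponent_bound z_gt0 abc_z p_small).
have NzT : N * z <= T ^ 68 by apply: leq_trans TzT; rewrite leq_mul2r N_T orbT.
have T68 : T ^ 68 <= T ^ 136 by rewrite leq_pexp2l.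
split.
  apply: leq_trans T68; apply: leq_trans NzT; apply: leq_trans aNz.
  by rewrite -{1}(expn1 a) leq_pexp2l.
rewrite (expnM T 68 2) leq_exp2r //; apply: leq_trans TzT.
apply: leq_trans (leq_add aNz dNz) _.
by rewrite addnn -mul2n mulnA leq_mul2r NT orbT.
Qed.

Section RealBounds.
Local Open Scope R_scope.

Lemma Rabs_int2R z : Rabs (int2R z) = INR `|z|.
Proof.
by case: z => n; rewrite /int2R ?Rabs_Ropp Rabs_pos_eq //; apply: pos_INR.
Qed.

Lemma Rabs_rat2R q : Rabs (rat2R q) = INR `|numq q| / INR `|denq q|.
Proof.
by rewrite /rat2R /Rdiv Rabs_mult Rabs_inv !Rabs_int2R.
Qed.

Lemma ratio_le_num (n d U V : nat) : (0 < d)%N -> (0 < V)%N -> (n * V = U * d)%N ->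
  INR n / INR d <= INR U.
Proof.
move=> d_gt0 V_gt0 cross.
have [dR VR] : 0 < INR d /\ 1 <= INR V by split; [apply/lt_0_INR/ltP | apply/(le_INR 1)/leP].
have nVUd := congr1 INR cross; rewrite !mult_INR in nVUd.
apply: (Rmult_le_reg_r (INR d)) => //; rewrite /Rdiv Rmult_assoc Rinv_l; last lra.
have := pos_INR n; nra.
Qed.

Lemma ln_le_compat x y : 0 < x -> x <= y -> ln x <= ln y.
Proof. by move=> x_gt0 [xy | <-]; [apply/Rlt_le/ln_increasing | apply: Rle_refl]. Qed.

Definition log_const (K : nat) : R := 136 * ((ln (INR K) + ln 2) / ln 2 + 1).

Lemma log_const_gt0 K : (0 < K)%N -> 0 < log_const K.
Proof.
move=> K_gt0; have ln2 : 0 < ln 2 by have := ln_lt_2; lra.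
have lnK : 0 <= ln (INR K).
  by rewrite -ln_1; apply: ln_le_compat; [lra | apply/(le_INR 1)/leP].
have : 0 < (ln (INR K) + ln 2) / ln 2 by apply: Rdiv_pos_pos; lra.
rewrite /log_const; lra.
Qed.

Lemma ln_power_bound (K N : nat) (r : R) : (0 < K)%N -> (2 <= N)%N -> 0 <= r ->
  r <= INR ((K * (2 * N)) ^ 136) -> ln r <= log_const K * ln (INR N).
Proof.
move=> K_gt0 N_ge2 r_ge0 r_le.
have ln2 : 0 < ln 2 by have := ln_lt_2; lra.
have [K1 N2] : 1 <= INR K /\ 2 <= INR N by split; [apply/(le_INR 1)/leP | apply/(le_INR 2)/leP].
have lnN : ln 2 <= ln (INR N) by apply: ln_le_compat; lra.
have lnK : 0 <= ln (INR K) by rewrite -ln_1; apply: ln_le_compat; lra.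
have const_ge0 := Rlt_le _ _ (log_const_gt0 K_gt0).
case: r_ge0 => [r_gt0 | <-]; last first.
  have ln0 : ln 0 = 0 by rewrite /ln; case: Rlt_dec => // h; case: (Rlt_irrefl 0 h).
  by rewrite ln0; apply: Rmult_le_pos => //; lra.
apply: Rle_trans (ln_le_compat r_gt0 r_le) _.
rewrite INR_expn !mult_INR (_ : INR 2 = 2); last by simpl; lra.
rewrite ln_pow; last by apply: Rmult_lt_0_compat; lra.
rewrite !ln_mult; try lra.
have : ln (INR K) + ln 2 <= (ln (INR K) + ln 2) / ln 2 * ln (INR N).
  rewrite -{1}(Rmult_1_r (ln (INR K) + ln 2)) /Rdiv Rmult_assoc.
  apply: Rmult_le_compat_l; first lra.
  by apply: (Rmult_le_reg_l (ln 2)) => //; rewrite -Rmult_assoc Rinv_r; lra.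
rewrite /log_const /= => h; nra.
Qed.

Lemma ln_rat_bound (K N U V : nat) (q : rat) : (0 < K)%N -> (2 <= N)%N -> (0 < V)%N ->
  (`|numq q| * V = U * `|denq q|)%N -> (U <= (K * (2 * N)) ^ 136)%N ->
  ln (Rabs (rat2R q)) <= log_const K * ln (INR N).
Proof.
move=> K_gt0 N_ge2 V_gt0 cross U_le.
apply: ln_power_bound => //; first exact: Rabs_pos.
have den_gt0 : (0 < `|denq q|)%N by rewrite absz_gt0 denq_neq0.
by rewrite Rabs_rat2R; apply: Rle_trans (ratio_le_num den_gt0 V_gt0 cross) _; apply/le_INR/leP.
Qed.

End RealBounds.

Theorem lemma2p1 :
  ABC ->
  exists c : R, Rlt 0 c /\
    forall (N : nat) (P : pt), (0 < N)%N ->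
      on_curve N P -> ~ torsion N P ->
      (len (mulpt N 2 P) <= 1)%N ->
      Rle (ln (Rabs (rat2R (xcoord P)))) (Rmult c (ln (INR N))) /\
      Rle (ln (Rabs (rat2R (xcoord (mulpt N 2 P))))) (Rmult c (ln (INR N))).
Proof.
move=> abc; have [K [K_gt0 abcK]] := abc_nat_of_ABC abc.
exists (log_const K); split; first exact: log_const_gt0.
move=> N [|x y] N_gt0 curve not_tors len2P; first by case: not_tors; exists 1%N.
have [y_neq0 [y2 double]] := double_point curve not_tors.
rewrite double /= in len2P *.
set a := `|numq x|%N; set d := `|denq x|%N; set w := `|a ^ 2 - N * d ^ 2|.
have [a_gt0 w_gt0 e2d3 m2] :=
  lowest_terms_curve (a := a) (d := d) (w := w) erefl erefl erefl y_neq0 curve.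
rewrite (lowest_terms_double N erefl erefl e2d3 m2 y_neq0) in len2P *.
set U := ((a ^ 2 + N * d ^ 2) ^ 2)%N; set V := (4 * d * (a * w))%N.
have d_gt0 : (0 < d)%N by rewrite absz_gt0 denq_neq0.
have V_gt0 : (0 < V)%N by rewrite !muln_gt0 d_gt0 a_gt0 w_gt0.
have cad : coprime a d := coprime_num_den x.
have deq : descent_eq N a d w := descent_eq_dist N a d.
have cross := numq_cross U V_gt0.
have bad_in_den : {subset bad_prime N a d w <= primes `|denq (U%:R / V%:R : rat)|}.
  move=> q bad_q; rewrite mem_primes absz_gt0 denq_neq0 (bad_prime_dvd_den cad deq cross bad_q).
  by case/andP: bad_q => ->.
have [p [p_bad only_p]] := at_most_one_witness len2P bad_in_den.
have [N1 | N_ge2] : N = 1%N \/ (2 <= N)%N by lia.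
  move: deq only_p; rewrite N1 => deq1 only1.
  by case: (no_descent_N1 a_gt0 d_gt0 w_gt0 cad m2 deq1 only1).
have [aT UT] := descent_height_bound abcK K_gt0 N_gt0 a_gt0 d_gt0 w_gt0 cad m2 deq p_bad only_p.
split; first exact: (ln_rat_bound (U := a) K_gt0 N_ge2 d_gt0 erefl aT).
exact: ln_rat_bound K_gt0 N_ge2 V_gt0 cross UT.
Qed.
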